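(* Let $n\geq 1$ be an integer. The cyclic subgroup commutativity degree of the dicyclic group $Dic_{4n}$ is $$csd(Dic_{4n})=\begin{cases}\dfrac{\tau(2n)(\tau(2n)+n)+n(\tau(2n)+1)}{(\tau(2n)+n)^2}, & \text{if } n\equiv 1 \pmod 2,\\[2ex] \dfrac{\tau(2n)(\tau(2n)+n)+n(\tau(2n)+2)}{(\tau(2n)+n)^2}, & \text{if } n\equiv 0 \pmod 2.\end{cases}$$
   Context: For a finite group $G$, $L_1(G)$ denotes the set of cyclic subgroups of $G$, and the cyclic subgroup commutativity degree is $csd(G)=\frac{1}{|L_1(G)|^2}|\{(H,K)\in L_1(G)^2: HK=KH\}|$. $\tau(k)$ is the number of positive divisors of $k$. The dicyclic group is $Dic_{4n}=\langle a,\gamma\mid a^{2n}=e,\ \gamma^2=a^n,\ \gamma^{-1}a\gamma=a^{-1}\rangle$. *)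

From HB Require Import structures.
From mathcomp Require Import all_boot all_order all_algebra all_fingroup.
Set Implicit Arguments. Unset Strict Implicit. Unset Printing Implicit Defensive.
Import GRing.Theory Num.Theory.

Open Scope group_scope.

Definition cyclic_subgroups (gT : finGroupType) (G : {set gT}) : {set {set gT}} :=
  [set <[x]> | x in G].

Definition csd_count (gT : finGroupType) (G : {set gT}) : nat :=
  #|[set HK : {set gT} * {set gT} |
      [&& HK.1 \in cyclic_subgroups G, HK.2 \in cyclic_subgroups G
        & HK.1 * HK.2 == HK.2 * HK.1]]|.

Definition csd (gT : finGroupType) (G : {set gT}) : rat :=
  ((csd_count G)%:R / (#|cyclic_subgroups G| ^ 2)%:R)%R.

Definition tau (k : nat) : nat := size (divisors k).

(* G is (isomorphic to) the dicyclic group Dic_{4n} = <a, g | a^{2n}=1, g^2=a^n, g^-1 a g = a^-1>: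
   G is generated by a, g satisfying the defining relations and has order 4n
   (hence G is the full presented group, not a proper quotient). *)
Definition is_dicyclic (gT : finGroupType) (G : {group gT}) (n : nat) (a g : gT) : Prop :=
  [/\ <<[set a; g]>> = G, a ^+ (2 * n) = 1, g ^+ 2 = a ^+ n,
      g^-1 * a * g = a^-1 & #|G| = (4 * n)%N].

(* Dic_{4n} is the union of the cyclic subgroup A = <a> of order 2n and the
   coset A g, whose elements b_k = a^k g all have order 4 with square a^n.  So
   its cyclic subgroups are the tau(2n) subgroups of A, each normal because it
   is characteristic in the normal subgroup A, together with the n subgroups
   <b_i> = {1, a^n, b_i, b_(n+i)} for 0 <= i < n.  A subgroup of A permutes
   with every subgroup, whereas, since b_i b_j = a^(i-j+n), the subgroups <b_i>
   and <b_j> permute exactly when i = j or |i - j| = n/2.  Counting the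
   permuting pairs row by row gives tau(2n) (tau(2n) + n) + n (tau(2n) + c),
   where c = 1 for n odd and c = 2 for n even. *)

From mathcomp Require Import all_boot all_order all_algebra all_fingroup all_solvable.
From mathcomp Require Import zify.

Import GRing.Theory.

Set Implicit Arguments.
Unset Strict Implicit.
Unset Printing Implicit Defensive.

Local Open Scope nat_scope.

Lemma cards_rel_pairs (T : finType) (A : {set T}) (R : rel T) :
  #|[set p : T * T | [&& p.1 \in A, p.2 \in A & R p.1 p.2]]|
    = \sum_(x in A) #|[set y in A | R x y]|.
Proof.
transitivity (\sum_(x in A) \sum_(y | (y \in A) && R x y) 1).
  by rewrite pair_big_dep -sum1_card; apply: eq_bigl => p; rewrite !inE.
by apply: eq_bigr => x _; rewrite -sum1_card; apply: eq_bigl => y; rewrite inE.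
Qed.

Lemma cardsU_disjoint (T : finType) (A B : {set T}) :
  [disjoint A & B] -> #|A :|: B| = #|A| + #|B|.
Proof. by move=> disjAB; apply/eqP; rewrite (leq_card_setU A B).2. Qed.

Lemma card_cycle_subgroups (gT : finGroupType) (x : gT) :
  #|[set <[y]> | y in <[x]>]| = tau #[x].
Proof.
have ox_gt0 := order_gt0 x.
pose of_order d := <[x ^+ (#[x] %/ d)]>.
have card_of_order d : d %| #[x] -> #|of_order d| = d.
  by move=> dvd_d; rewrite -orderE orderXdiv ?dvdn_div // divnA // mulKn.
have -> : [set <[y]> | y in <[x]>] = [set H in map of_order (divisors #[x])].
  apply/setP=> H; rewrite inE; apply/imsetP/mapP => [[y x_y ->] | [d]].
    have dvd_y : #[y] %| #[x] by apply: cardSg; rewrite cycle_subG.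
    exists #[y]; first by rewrite -dvdn_divisors.
    apply/eqP; rewrite (eq_subG_cyclic (cycle_cyclic x)) ?cycle_subG ?mem_cycle //.
    by rewrite card_of_order.
  by move=> _ ->; exists (x ^+ (#[x] %/ d)); rewrite ?mem_cycle.
rewrite cardsE (card_uniqP _) ?size_map // map_inj_in_uniq ?divisors_uniq //.
move=> d1 d2; rewrite -!dvdn_divisors // => dvd_d1 dvd_d2 eq_d12.
by rewrite -(card_of_order d1) // -(card_of_order d2) // eq_d12.
Qed.

Lemma eqn_mod_lt3 m u v : u < 3 * m -> v < 3 * m -> u = v %[mod m] ->
  [|| u == v, u == v + m, v == u + m, u == v + 2 * m | v == u + 2 * m].
Proof.
move=> ltu ltv equv.
have m_gt0 : 0 < m by lia.
have qu : u %/ m < 3 by rewrite ltn_divLR.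
have qv : v %/ m < 3 by rewrite ltn_divLR.
move: equv (divn_eq u m) (divn_eq v m) (ltn_pmod u m_gt0) qu qv.
case: (u %/ m) => [|[|[|//]]]; case: (v %/ m) => [|[|[|//]]]; lia.
Qed.

Definition half_apart (n i j : nat) : bool := (2 * i == 2 * j + n) || (2 * j == 2 * i + n).

Lemma card_half_apart n (i : 'I_n) :
  #|[set j : 'I_n | (i == j) || half_apart n i j]| = if odd n then 1 else 2.
Proof.
case: n i => [[] //|m] i.
have := odd_double_half m.+1; case: ifP => odd_m def_m.
  suff -> : [set j : 'I_m.+1 | (i == j) || half_apart m.+1 i j] = [set i] by rewrite cards1.
  by apply/setP=> j; rewrite !inE /half_apart eq_sym -val_eqE /=; lia.
pose j0 : 'I_m.+1 := inord (if i < m.+1./2 then i + m.+1./2 else i - m.+1./2).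
have j0E : j0 = (if i < m.+1./2 then i + m.+1./2 else i - m.+1./2) :> nat.
  by rewrite inordK //; have := ltn_ord i; case: ifP; lia.
suff -> : [set j : 'I_m.+1 | (i == j) || half_apart m.+1 i j] = [set i; j0].
  by rewrite cards2 -val_eqE /= j0E; case: ifP; lia.
apply/setP=> j; rewrite !inE /half_apart eq_sym -!val_eqE /= j0E.
by have := ltn_ord i; have := ltn_ord j; case: ifP; lia.
Qed.

Section Dicyclic.

Local Open Scope group_scope.

Variables (gT : finGroupType) (n : nat) (a g : gT).
Hypotheses (n_gt0 : (0 < n)%N) (order_a : #[a] = (2 * n)%N) (g_notin_A : g \notin <[a]>)
  (sqr_g : g ^+ 2 = a ^+ n) (conj_a_g : a ^ g = a^-1).

Local Notation b k := (a ^+ k * g).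

Lemma expa_eq u v : (u < 3 * (2 * n))%N -> (v < 3 * (2 * n))%N -> a ^+ u = a ^+ v ->
  [|| u == v, u == v + 2 * n, v == u + 2 * n, u == v + 2 * (2 * n) | v == u + 2 * (2 * n)]%N.
Proof.
by move=> ltu ltv /eqP; rewrite eq_expg_mod_order order_a => /eqP; apply: eqn_mod_lt3.
Qed.

Lemma expa_add2n u : a ^+ (u + 2 * n) = a ^+ u.
Proof. by rewrite expgD -order_a expg_order mulg1. Qed.

Lemma g_expa k : g * a ^+ k = a ^- k * g.
Proof. by rewrite [RHS]conjgC conjVg conjXg conj_a_g expgVn invgK. Qed.

(* That is, b_u b_v = a^(u - v + n), shifted by the period 2n to avoid truncated subtraction. *)
Lemma mul_b u v : (v <= u + 3 * n)%N -> b u * b v = a ^+ (u + 3 * n - v).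
Proof.
move=> le_vu.
have -> : b u * b v = a ^+ u * a ^- v * a ^+ n.
  by rewrite mulgA -(mulgA _ g) g_expa !mulgA -(mulgA _ g g) -expg2 sqr_g.
rewrite (commuteV (commuteX2 u v (commute_refl a))) -mulgA -expgD.
rewrite -(expa_add2n (u + n)) (_ : (u + n + 2 * n = v + (u + 3 * n - v))%N); last by lia.
by rewrite expgD mulKg.
Qed.

Lemma sqr_b k : b k ^+ 2 = a ^+ n.
Proof.
rewrite expg2 mul_b; last by lia.
by rewrite (_ : (k + 3 * n - k = n + 2 * n)%N) ?expa_add2n //; lia.
Qed.

Lemma cube_b k : b k ^+ 3 = b (n + k).
Proof. by rewrite expgSr sqr_b mulgA -expgD. Qed.

Lemma mem_cycle_b k y : y \in <[b k]> ->
  exists2 e, (e == 0) || (e == n) & (y = a ^+ e) \/ (y = b (e + k)).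
Proof.
case/cycleP=> i ->.
have b4 : b k ^+ 4 = 1 by rewrite (expgM _ 2 2) sqr_b -expgM mulnC -order_a expg_order.
rewrite -(expg_mod i b4).
case: (i %% 4) (ltn_pmod i (isT : 0 < 4)%N) => [|[|[|[|//]]]] _.
- by exists 0; [|left].
- by exists 0; [|right; rewrite add0n].
- by exists n; [rewrite eqxx orbT | left; rewrite sqr_b].
- by exists n; [rewrite eqxx orbT | right; rewrite cube_b].
Qed.

Lemma b_notin_A k : b k \notin <[a]>.
Proof. by rewrite groupMl ?mem_cycle. Qed.

Lemma expa_neq_b u v : a ^+ u <> b v.
Proof. by move=> e; have := b_notin_A v; rewrite -e mem_cycle. Qed.

Lemma cycle_b_shift k : <[b (n + k)]> = <[b k]>.
Proof.
have cube_shift : b (n + k) ^+ 3 = b k.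
  by rewrite cube_b (_ : (n + (n + k) = k + 2 * n)%N) ?expa_add2n //; lia.
apply/eqP; rewrite eqEsubset !cycle_subG; apply/andP; split.
  by rewrite -cube_b mem_cycle.
by rewrite -{1}cube_shift mem_cycle.
Qed.

Lemma cycle_b_mod k : <[b k]> = <[b (k %% n)]>.
Proof.
rewrite {1}(divn_eq k n); elim: (k %/ n) => [|q IHq]; first by rewrite add0n.
by rewrite mulSn -addnA cycle_b_shift.
Qed.

Lemma cycle_b_inj i j : (i < n)%N -> (j < n)%N -> <[b i]> = <[b j]> -> i = j.
Proof.
move=> lt_i lt_j eq_ij; have := cycle_id (b i); rewrite eq_ij.
case/mem_cycle_b=> e e_0n [/esym/expa_neq_b // | /mulIg /expa_eq]; lia.
Qed.

Lemma permutable_cycle_b i j : (i < n)%N -> (j < n)%N ->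
  (<[b i]> * <[b j]> == <[b j]> * <[b i]>) = (i == j) || half_apart n i j.
Proof.
move=> lt_i lt_j; apply/eqP/idP=> [perm_ij | ].
  have := mem_mulg (cycle_id (b i)) (cycle_id (b j)).
  rewrite perm_ij mul_b; last by lia.
  case/mulsgP=> y z /mem_cycle_b[e1 e1_0n [] ->] /mem_cycle_b[e2 e2_0n [] ->].
  - by rewrite -expgD => /expa_eq; rewrite /half_apart; lia.
  - by rewrite mulgA -expgD => /expa_neq_b.
  - move=> e; have := b_notin_A (e1 + j).
    by rewrite -(groupMr _ (mem_cycle a e2)) -e mem_cycle.
  - by rewrite mul_b => [/expa_eq|]; rewrite /half_apart; lia.
case/orP=> [/eqP -> // | half_ij].
have comm_ij : b i * b j = b j * b (n + i).
  rewrite !mul_b; try lia.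
  case/orP: half_ij => /eqP half_ij.
    by rewrite (_ : (i + 3 * n - j = j + 3 * n - (n + i) + 2 * n)%N) ?expa_add2n //; lia.
  by congr (_ ^+ _); lia.
apply/esym/normC; rewrite cycle_subG; apply/normP.
by rewrite -cycleJ conjgE comm_ij mulKg cycle_b_shift.
Qed.

Local Notation D := (<[a]> :|: <[a]> :* g).
Local Notation cycA := [set <[y]> | y in <[a]>].
Local Notation cycAg := [set <[b i]> | i : 'I_n].

Lemma norm_cycle_A u : u \in <[a]> -> D \subset 'N(<[u]>).
Proof.
move=> A_u.
have nA_D : D \subset 'N(<[a]>).
  have nA_g : g \in 'N(<[a]>) by apply/normP; rewrite -cycleJ conj_a_g cycleV.
  rewrite subUset normG /=; apply/subsetP=> _ /rcosetP[y A_y ->].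
  by rewrite groupM // (subsetP (normG _)).
by apply: char_norm_trans nA_D; apply: cycle_subgroup_char; rewrite cycle_subG.
Qed.

Lemma cyclic_subgroups_dic : cyclic_subgroups D = cycA :|: cycAg.
Proof.
rewrite /cyclic_subgroups imsetU; congr (_ :|: _); apply/setP=> X.
apply/imsetP/imsetP => [[_ /rcosetP[_ /cycleP[k ->] ->] ->] | [i _ ->]].
  by exists (Ordinal (ltn_pmod k n_gt0)); rewrite // -cycle_b_mod.
by exists (b i); rewrite // mem_rcoset mulgK mem_cycle.
Qed.

Lemma cycle_b_ord_inj : injective (fun i : 'I_n => <[b i]>).
Proof. by move=> i j /cycle_b_inj eq_ij; apply/val_inj/eq_ij. Qed.

Lemma disjoint_cycA_cycAg : [disjoint cycA & cycAg].
Proof.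
apply/pred0P=> X /=; apply/andP=> [[/imsetP[y A_y ->] /imsetP[i _ eq_yi]]].
by have := b_notin_A i; rewrite -cycle_subG -eq_yi cycle_subG A_y.
Qed.

Lemma card_cyclic_subgroups_dic : #|cyclic_subgroups D| = (tau (2 * n) + n)%N.
Proof.
rewrite cyclic_subgroups_dic cardsU_disjoint ?disjoint_cycA_cycAg //.
by rewrite card_cycle_subgroups order_a card_imset ?card_ord //; apply: cycle_b_ord_inj.
Qed.

Lemma permutable_cycA H K : H \in cycA -> K \in cycA :|: cycAg -> H * K = K * H.
Proof.
case/imsetP=> u A_u ->; rewrite -cyclic_subgroups_dic => /imsetP[k D_k ->].
by apply/esym/normC; rewrite cycle_subG (subsetP (norm_cycle_A A_u)).
Qed.

Lemma permuting_cycA H : H \in cycA ->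
  [set K in cycA :|: cycAg | H * K == K * H] = cycA :|: cycAg.
Proof.
move=> A_H; apply/setP=> K; rewrite inE.
by case: (boolP (K \in _)) => //= L_K; rewrite (permutable_cycA A_H L_K) eqxx.
Qed.

Lemma permuting_cycle_b (i : 'I_n) :
  [set K in cycA :|: cycAg | <[b i]> * K == K * <[b i]>]
    = cycA :|: [set <[b j]> | j : 'I_n in [set j : 'I_n | (i == j) || half_apart n i j]].
Proof.
apply/setP=> K; rewrite !inE; case: (boolP (K \in cycA)) => [A_K | nA_K] /=.
  have L_bi : <[b i]> \in cycA :|: cycAg by apply/setUP; right; apply: imset_f.
  by rewrite (permutable_cycA A_K L_bi) eqxx.
apply/andP/imsetP => [[/imsetP[j _ ->] perm_ij] | [j]].
  by exists j => //; rewrite inE -val_eqE -(permutable_cycle_b (ltn_ord i) (ltn_ord j)).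
rewrite inE -val_eqE -(permutable_cycle_b (ltn_ord i) (ltn_ord j)) => perm_ij ->.
by split; first exact: imset_f.
Qed.

Lemma csd_count_dic : csd_count D
  = (tau (2 * n) * (tau (2 * n) + n) + n * (tau (2 * n) + if odd n then 1 else 2))%N.
Proof.
rewrite /csd_count (cards_rel_pairs _ (fun H K : {set gT} => H * K == K * H)).
rewrite cyclic_subgroups_dic.
rewrite (eq_bigl [predU cycA & cycAg]) => [|X]; last by rewrite !inE.
rewrite bigU ?disjoint_cycA_cycAg //=.
rewrite (eq_bigr (fun=> tau (2 * n) + n)%N) => [|H A_H]; last first.
  by rewrite permuting_cycA // -cyclic_subgroups_dic card_cyclic_subgroups_dic.
rewrite sum_nat_const card_cycle_subgroups order_a big_imset /=; last first.
  by move=> i j _ _; apply: cycle_b_ord_inj.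
rewrite (eq_bigr (fun=> tau (2 * n) + if odd n then 1 else 2)%N) => [|i _].
  by rewrite sum_nat_const card_ord.
rewrite permuting_cycle_b cardsU_disjoint; last first.
  apply: disjointWr disjoint_cycA_cycAg; apply/subsetP=> _ /imsetP[j _ ->].
  exact: imset_f.
rewrite card_cycle_subgroups order_a card_imset ?card_half_apart //.
exact: cycle_b_ord_inj.
Qed.

End Dicyclic.

Lemma dicyclic_structure (gT : finGroupType) (G : {group gT}) n (a g : gT) :
  0 < n -> is_dicyclic G n a g ->
  [/\ #[a] = 2 * n, g \notin <[a]>, (a ^ g = a^-1)%g & G :=: <[a]> :|: <[a]> :* g].
Proof.
move=> n_gt0 [gen_G a2n sqr_g conj_a card_G].
have conj_a_g : (a ^ g = a^-1)%g by rewrite /conjg mulgA.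
have nA_g : g \in 'N(<[a]>) by apply/normP; rewrite -cycleJ conj_a_g cycleV.
have sub_g : <[g]> \subset <[a]> :|: <[a]> :* g.
  apply/subsetP=> _ /cycleP[k ->].
  rewrite (divn_eq k 2) expgD mulnC expgM sqr_g -expgM modn2 !inE mem_rcoset.
  by case: (odd k); rewrite ?expg1 ?expg0 ?mulg1 ?mulgK mem_cycle ?orbT.
have sub_G : G \subset <[a]> :|: <[a]> :* g.
  have join_Ag : <[a]> <*> <[g]> = (<[a]> * <[g]>)%g.
    by apply/comm_joingE/esym/normC; rewrite cycle_subG.
  apply: (subset_trans (_ : G \subset (<[a]> * <[g]>)%g)).
    by rewrite -gen_G -join_Ag genS // setUSS // sub1set cycle_id.
  apply/subsetP=> _ /mulsgP[u v A_u /(subsetP sub_g) Ag_v ->].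
  by move: Ag_v; rewrite !inE !mem_rcoset -mulgA => /orP[] A_v; rewrite (groupM A_u A_v) ?orbT.
have card_Ag : #|<[a]> :|: <[a]> :* g| <= 2 * #[a].
  by apply: leq_trans (leq_card_setU _ _).1 _; rewrite card_rcoset addnn -mul2n.
have le_a : #[a] <= 2 * n by rewrite dvdn_leq ?muln_gt0 // order_dvdn a2n.
have le_G := subset_leq_card sub_G; rewrite card_G in le_G.
have order_a : #[a] = 2 * n by lia.
have g_notin_A : g \notin <[a]>.
  by apply: contraTN le_G => A_g; rewrite rcoset_id // setUid -ltnNge -/(order a); lia.
split=> //; apply/eqP; rewrite eqEcard sub_G card_G; lia.
Qed.

Theorem theorem3p1 (gT : finGroupType) (G : {group gT}) (n : nat) (a g : gT) :
  (1 <= n)%N -> is_dicyclic G n a g ->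
  csd G =
  (if odd n then
     (((tau (2 * n))%:R * ((tau (2 * n))%:R + n%:R) + n%:R * ((tau (2 * n))%:R + 1))
       / ((tau (2 * n))%:R + n%:R) ^+ 2)%R
   else
     (((tau (2 * n))%:R * ((tau (2 * n))%:R + n%:R) + n%:R * ((tau (2 * n))%:R + 2))
       / ((tau (2 * n))%:R + n%:R) ^+ 2)%R).
Proof.
move=> n_gt0 dic; have [order_a g_notin_A conj_a_g ->] := dicyclic_structure n_gt0 dic.
case: dic => _ _ sqr_g _ _.
rewrite /csd (csd_count_dic n_gt0 order_a g_notin_A sqr_g conj_a_g).
rewrite (card_cyclic_subgroups_dic n_gt0 order_a g_notin_A sqr_g conj_a_g).
by case: ifP => _; rewrite !(natrD, natrM, natrX).
Qed.
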